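(* Let $K$ be a field of characteristic zero, let $u,v,\ell\in K[X]$ be of degree one, and let $F=u\circ X^d\circ v$ where $d>1$. The following are equivalent: (1) the equation $F\circ\ell\circ F\circ b=a\circ F\circ F$ has infinitely many solutions in degree-one polynomials $a,b\in K[X]$; (2) $F=v^{-1}\circ\epsilon X^d\circ v$ and $\ell=v^{-1}\circ\delta X\circ v$ for some $\epsilon,\delta\in K^*$.
   Context: $\circ$ denotes composition of polynomials; $v^{-1}$ is the compositional inverse of $v$. *)

From HB Require Import structures.
From mathcomp Require Import all_boot all_order all_algebra.
Set Implicit Arguments. Unset Strict Implicit. Unset Printing Implicit Defensive.
Import GRing.Theory.
Local Open Scope ring_scope.

(* Compositional inverse of a degree-one polynomial v = c1 X + c0 (c1 != 0):
   v^{-1} = c1^{-1} (X - c0), so that v^{-1} \Po v = X = v \Po v^{-1}. *)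
Definition lin_inv (K : fieldType) (v : {poly K}) : {poly K} :=
  (lead_coef v)^-1 *: ('X - (v`_0)%:P).

From HB Require Import structures.
From mathcomp Require Import all_boot all_order all_algebra.
From mathcomp Require Import ring zify.
From Stdlib Require Import Classical_Prop.
Set Implicit Arguments.
Unset Strict Implicit.
Unset Printing Implicit Defensive.
Import GRing.Theory.
Local Open Scope ring_scope.

(* Conjugating by [v] (w |-> v o w o v^-1) turns F into U o X^d with U = v o u = alpha X + beta,
   and l into L, with L o U = p X + q.  For a solution (a, b) write the conjugate of b as
   r X + s; cancelling the outer U leaves (p (r X + s)^d + q)^d = c1 (alpha X^d + beta)^d + c0.
   The right-hand side is a polynomial in X^d, so its coefficient of degree d^2 - 1 vanishes,
   which in characteristic zero forces s = 0; the two top coefficients then give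
   q alpha = p r^d beta.  If beta = q = 0 this is the normal form (2) with eps = alpha and
   delta = p / alpha.  Otherwise r is a root of the nonzero polynomial p beta X^d - q alpha, and
   r determines b, hence a: there are finitely many solutions.  Conversely, under (2) every
   r <> 0 yields a solution, and a field of characteristic zero is infinite. *)

Section LinearPoly.
Variable R : comNzRingType.
Implicit Types (w q : {poly R}) (r s : R).

Lemma lin_polyE w : size w = 2%N -> w = w`_1 *: 'X + (w`_0)%:P.
Proof.
move=> sw; apply/polyP => -[|[|i]]; rewrite coefD coefZ coefX coefC /=.
- by rewrite mulr0 add0r.
- by rewrite mulr1 addr0.
- by rewrite mulr0 addr0 nth_default // sw.
Qed.

Lemma lin_poly_coef1_neq0 w : size w = 2%N -> w`_1 != 0.
Proof.
by move=> sw; have := lead_coef_eq0 w; rewrite lead_coefE sw -size_poly_eq0 sw => ->.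
Qed.

Lemma comp_lin_poly w q : size w = 2%N -> w \Po q = w`_1 *: q + (w`_0)%:P.
Proof.
by move=> sw; rewrite {1}(lin_polyE sw) comp_polyD comp_polyZ comp_polyX comp_polyC.
Qed.

Lemma size_lin_expn_leq r s n : (size ((r *: 'X + s%:P) ^+ n)%R <= n.+1)%N.
Proof.
rewrite (leq_trans (size_poly_exp_leq _ _)) // ltnS.
have : (size (r *: 'X + s%:P)%R <= 2)%N.
  rewrite (leq_trans (size_polyD _ _)) // geq_max size_polyC.
  by rewrite (leq_trans (size_scale_leq _ _)) ?size_polyX //; case: (s != 0).
by case: (size _) => [|[|[|]]] //= _; rewrite ?mul0n ?mul1n.
Qed.

Lemma lin_exprS r s n :
  (r *: 'X + s%:P) ^+ n.+1 = r *: ((r *: 'X + s%:P) ^+ n * 'X) + s *: (r *: 'X + s%:P) ^+ n.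
Proof. by rewrite exprSr mulrDr -scalerAr -[s *: _]mul_polyC [s%:P * _]mulrC. Qed.

Lemma coef_lin_expn r s n : ((r *: 'X + s%:P) ^+ n)`_n = r ^+ n.
Proof.
elim: n => [|n IHn]; first by rewrite expr0 coefC.
rewrite lin_exprS coefD !coefZ coefMX /= IHn exprS.
by rewrite nth_default ?mulr0 ?addr0 // size_lin_expn_leq.
Qed.

Lemma coef_lin_expnS r s n :
  ((r *: 'X + s%:P) ^+ n.+1)`_n = n.+1%:R * r ^+ n * s.
Proof.
elim: n => [|n IHn].
  by rewrite expr1 coefD coefZ coefX coefC /= mulr0 add0r expr0 mulr1 mul1r.
rewrite lin_exprS coefD !coefZ coefMX /= IHn coef_lin_expn exprS -addn1 natrD.
ring.
Qed.

(* Only the two top coefficients of [P] reach degree [n] of [P \Po (r X + s)]. *)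
Lemma coef_comp_lin_poly (P : {poly R}) n r s : (size P <= n.+2)%N ->
  (P \Po (r *: 'X + s%:P))`_n = P`_n * r ^+ n + P`_n.+1 * (n.+1%:R * r ^+ n * s).
Proof.
move=> sP; rewrite comp_polyE coef_sum.
rewrite (big_ord_widen n.+2 (fun i => (P`_i *: (r *: 'X + s%:P) ^+ i)`_n)) //.
rewrite big_mkcond (eq_bigr (fun i : 'I_n.+2 => (P`_i *: (r *: 'X + s%:P) ^+ i)`_n)).
  rewrite !big_ord_recr /= big1 ?add0r => [|[i lt_in] _ /=].
    by rewrite !coefZ coef_lin_expn coef_lin_expnS.
  by rewrite coefZ (nth_default 0 (leq_trans (size_lin_expn_leq _ _ _) lt_in)) mulr0.
by move=> i _; case: ltnP => // le_Pi; rewrite coefZ nth_default ?mul0r.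
Qed.
End LinearPoly.

Lemma size_lin_poly (R : idomainType) (r s : R) : r != 0 -> size (r *: 'X + s%:P) = 2%N.
Proof.
move=> r_neq0; rewrite size_polyDl (size_scale _ r_neq0) ?size_polyX // size_polyC.
by case: (s != 0).
Qed.

Lemma comp_polyXn_inj (R : nzSemiRingType) (d : nat) (P Q : {poly R}) :
  (0 < d)%N -> P \Po 'X^d = Q \Po 'X^d -> P = Q.
Proof.
move=> d_gt0 ePQ; apply/polyP => i.
have := congr1 (fun S : {poly R} => S`_(i * d)) ePQ.
by rewrite /= !coef_comp_poly_Xn // dvdn_mull // mulnK.
Qed.

Lemma not_dvdn_pred_mul k d : (1 < d)%N -> (0 < k)%N -> ~~ (d %| (k * d).-1)%N.
Proof.
move=> d_gt1 k_gt0; have -> : (k * d).-1 = (k.-1 * d + d.-1)%N.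
  by case: k k_gt0 => // k _; rewrite mulSn /=; lia.
rewrite dvdn_addr ?dvdn_mull //; apply/negP => /dvdn_leq; lia.
Qed.

Section CharZero.
Variable K : fieldType.
Hypothesis charK : [pchar K] =i pred0.
Implicit Types (G H : {poly K}) (r s : K).

Lemma char0_natr_neq0 n : (n != 0)%N -> n%:R != 0 :> K.
Proof. by move: charK => /pcharf0P ->. Qed.

Lemma char0_natr_inj : injective (fun n : nat => n%:R : K).
Proof.
move=> m n /= emn; wlog le_mn : m n emn / (m <= n)%N.
  by move=> W; case: (leqP m n) => [|/ltnW] /W ->.
apply/eqP; rewrite eqn_leq le_mn /= leqNgt -subn_gt0; apply/negP => /lt0n_neq0 nz.
by move: (char0_natr_neq0 nz); rewrite natrB // emn subrr eqxx.
Qed.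

Lemma char0_exists_nonzero_notin (s : seq K) : exists r, r != 0 /\ r \notin s.
Proof.
set t := [seq n.+1%:R : K | n <- iota 0 (size s).+1].
have ut : uniq t by rewrite map_inj_uniq ?iota_uniq // => m n /char0_natr_inj [].
have [/allP t_sub|/allPn [_ /mapP [n _ ->] n_notin]] := boolP (all (mem s) t).
  by have := uniq_leq_size ut t_sub; rewrite size_map size_iota ltnn.
by exists n.+1%:R; rewrite char0_natr_neq0.
Qed.

(* Compare the coefficients of degree [size (G \Po 'X^d) - 2], which [d] does not divide. *)
Lemma comp_Xn_shift_eq0 G H d r s : (1 < d)%N -> (1 < size G)%N -> r != 0 ->
  (G \Po 'X^d) \Po (r *: 'X + s%:P) = H \Po 'X^d -> s = 0.
Proof.
move=> d_gt1 sG r_neq0 eGH.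
have [k def_sG] : exists k, size G = k.+2 by exists (size G).-2; lia.
have [n def_n] : exists n, (k.+1 * d)%N = n.+1 by exists (k.+1 * d).-1; lia.
have sGX : (size (G \Po 'X^d) <= n.+2)%N.
  by rewrite (leq_trans (size_comp_poly_leq _ _)) // size_polyXn def_sG -def_n.
have := congr1 (fun S : {poly K} => S`_n) eGH.
rewrite /= coef_comp_lin_poly // !coef_comp_poly_Xn; try lia.
have nd_n : ~~ (d %| n)%N by have := @not_dvdn_pred_mul k.+1 d d_gt1 isT; rewrite def_n.
rewrite (negPf nd_n) -def_n dvdn_mull // mulnK; try lia.
rewrite mul0r add0r => /eqP; rewrite !mulf_eq0 expf_eq0 (negPf r_neq0) andbF orbF.
have lead_neq0 : G`_k.+1 != 0.
  by have := lead_coef_eq0 G; rewrite lead_coefE def_sG -size_poly_eq0 def_sG => ->.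
have N_neq0 : (k.+1 * d)%:R != 0 :> K by rewrite char0_natr_neq0 //; lia.
by rewrite (negPf lead_neq0) (negPf N_neq0) => /eqP.
Qed.

Lemma lin_expn_eq n (a b a' b' c e : K) : (1 < n)%N -> a != 0 ->
  (a *: 'X + b%:P) ^+ n = c *: (a' *: 'X + b'%:P) ^+ n + e%:P -> b * a' = a * b'.
Proof.
case: n => [|[|m]] // _ a_neq0 eab.
have top := congr1 (fun S : {poly K} => S`_m.+2) eab.
have sub := congr1 (fun S : {poly K} => S`_m.+1) eab.
rewrite /= !coefD !coefZ !coefC /= !addr0 !coef_lin_expn in top.
rewrite /= !coefD !coefZ !coefC /= !addr0 !coef_lin_expnS in sub.
have N_neq0 : m.+2%:R * a ^+ m.+1 != 0 by rewrite mulf_neq0 ?expf_neq0 ?char0_natr_neq0.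
apply: (mulfI N_neq0).
have -> : m.+2%:R * a ^+ m.+1 * (b * a') = m.+2%:R * a ^+ m.+1 * b * a' by ring.
have -> : m.+2%:R * a ^+ m.+1 * (a * b') = m.+2%:R * a ^+ m.+2 * b' by rewrite [a ^+ m.+2]exprS; ring.
by rewrite sub top [a' ^+ m.+2]exprSr; ring.
Qed.

Lemma lin_expn_comp_Xn_eq d (p q r s c1 c0 alpha beta : K) :
    (1 < d)%N -> p != 0 -> r != 0 ->
  (p *: (r *: 'X + s%:P) ^+ d + q%:P) ^+ d
    = (c1 *: (alpha *: 'X + beta%:P) ^+ d + c0%:P) \Po 'X^d ->
  s = 0 /\ q * alpha = p * r ^+ d * beta.
Proof.
move=> d_gt1 p_neq0 r_neq0 epq.
have eG (b : {poly K}) : (p *: b ^+ d + q%:P) ^+ d = (((p *: 'X + q%:P) ^+ d) \Po 'X^d) \Po b.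
  by rewrite -comp_polyA comp_Xn_poly [RHS]rmorphXn /= comp_polyD comp_polyZ comp_polyX comp_polyC.
have sG : (1 < size ((p *: 'X + q%:P) ^+ d))%N.
  have := size_exp (p *: 'X + q%:P) d; rewrite size_lin_poly //.
  by case: (size _) => [|[|n]] //= e; lia.
have s0 : s = 0.
  apply: (comp_Xn_shift_eq0 (H := c1 *: (alpha *: 'X + beta%:P) ^+ d + c0%:P) d_gt1 sG r_neq0).
  by rewrite -eG.
split=> //; move: epq; rewrite s0 addr0.
have -> : (p *: (r *: 'X) ^+ d + q%:P) ^+ d = ((p * r ^+ d) *: 'X + q%:P) ^+ d \Po 'X^d.
  by rewrite rmorphXn /= comp_polyD comp_polyZ comp_polyX comp_polyC exprZn scalerA.
move=> /(comp_polyXn_inj (ltnW d_gt1)) /lin_expn_eq.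
by apply; rewrite // mulf_neq0 ?expf_neq0.
Qed.
End CharZero.

Section LinearConjugation.
Variable K : fieldType.
Implicit Types (v w P Q W : {poly K}).

Lemma lin_invE w : size w = 2%N -> lin_inv w = (w`_1)^-1 *: 'X + (- ((w`_1)^-1 * w`_0))%:P.
Proof. by move=> sw; rewrite /lin_inv lead_coefE sw scalerBr polyCN polyCM mul_polyC. Qed.

Lemma size_lin_inv w : size w = 2%N -> size (lin_inv w) = 2%N.
Proof. by move=> sw; rewrite lin_invE // size_lin_poly // invr_eq0 lin_poly_coef1_neq0. Qed.

Lemma lin_inv_comp w : size w = 2%N -> lin_inv w \Po w = 'X.
Proof.
move=> sw; rewrite /lin_inv comp_polyZ comp_polyB comp_polyX comp_polyC lead_coefE sw.
by rewrite [X in X - _](lin_polyE sw) addrK scalerA mulVf ?lin_poly_coef1_neq0 ?scale1r.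
Qed.

Lemma comp_lin_inv w : size w = 2%N -> w \Po lin_inv w = 'X.
Proof.
move=> sw; rewrite (comp_lin_poly _ sw) /lin_inv lead_coefE sw scalerA.
by rewrite mulfV ?lin_poly_coef1_neq0 // scale1r addrNK.
Qed.

Definition lin_conj v w := v \Po (w \Po lin_inv v).
Definition lin_unconj v W := lin_inv v \Po (W \Po v).

Variable v : {poly K}.
Hypothesis sv : size v = 2%N.

Lemma lin_conjK : cancel (lin_conj v) (lin_unconj v).
Proof.
move=> w; rewrite /lin_conj /lin_unconj !comp_polyA lin_inv_comp // comp_polyX.
by rewrite -!comp_polyA lin_inv_comp // comp_polyXr.
Qed.

Lemma lin_unconjK : cancel (lin_unconj v) (lin_conj v).
Proof.
move=> W; rewrite /lin_conj /lin_unconj !comp_polyA comp_lin_inv // comp_polyX.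
by rewrite -!comp_polyA comp_lin_inv // comp_polyXr.
Qed.

Lemma lin_conj_inj : injective (lin_conj v).
Proof. exact: can_inj lin_conjK. Qed.

Lemma lin_conj_comp P Q : lin_conj v (P \Po Q) = lin_conj v P \Po lin_conj v Q.
Proof.
rewrite /lin_conj !comp_polyA; congr (_ \Po _).
by rewrite -[((v \Po P) \Po lin_inv v) \Po v]comp_polyA lin_inv_comp // comp_polyXr.
Qed.

Lemma lin_conj_compr W : lin_conj v (W \Po v) = v \Po W.
Proof. by rewrite /lin_conj -comp_polyA comp_lin_inv // comp_polyXr. Qed.

Lemma size_lin_conj w : size w = 2%N -> size (lin_conj v w) = 2%N.
Proof. by move=> sw; rewrite /lin_conj size_comp_poly2 // size_comp_poly2 // size_lin_inv. Qed.

Lemma size_lin_unconj W : size W = 2%N -> size (lin_unconj v W) = 2%N.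
Proof. by move=> sW; rewrite /lin_unconj size_comp_poly2 ?size_lin_inv // size_comp_poly2. Qed.
End LinearConjugation.

Lemma finite_cover_of_inj_roots (T : eqType) (R : idomainType) (P : T -> Prop)
    (f : T -> R) (q : {poly R}) :
  q != 0 -> (forall x y, P x -> P y -> f x = f y -> x = y) ->
  (forall x, P x -> root q (f x)) ->
  exists s : seq T, forall x, P x -> x \in s.
Proof.
move=> q_neq0 f_inj root_f; apply: NNPP => no_cover.
have avoid (s : seq T) : exists x, P x /\ x \notin s.
  apply: NNPP => no_x; apply: no_cover; exists s => x Px.
  by apply: NNPP => /negP x_notin; apply: no_x; exists x.
have [t [st ut Pt]] : exists t, [/\ size t = size q, uniq t & forall x, x \in t -> P x].
  elim: (size q) => [|n [t [st ut Pt]]]; first by exists [::].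
  have [x [Px x_notin]] := avoid t.
  exists (x :: t); split=> /=; [by rewrite st | by rewrite x_notin ut |].
  by move=> y; rewrite inE => /predU1P [->|/Pt].
have uft : uniq (map f t) by rewrite map_inj_in_uniq // => x y /Pt Px /Pt Py; exact: f_inj.
have rft : all (root q) (map f t) by apply/allP => _ /mapP [x /Pt Px ->]; exact: root_f.
by have := max_poly_roots q_neq0 rft uft; rewrite size_map st ltnn.
Qed.

(* With [G = U \Po 'X^d] the equation [G \Po L \Po G \Po b = a \Po G \Po G] reads
   [U \Po Z = (a \Po U) \Po W]; cancelling [U] exhibits [Z] as an affine image of [W]. *)
Lemma equation_power_form (K : fieldType) d (U L a b : {poly K}) :
    size U = 2%N -> size a = 2%N ->
  (U \Po 'X^d) \Po (L \Po ((U \Po 'X^d) \Po b)) = a \Po ((U \Po 'X^d) \Po (U \Po 'X^d)) ->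
  exists c1 c0, (L \Po U \Po b ^+ d) ^+ d
    = (c1 *: (U`_1 *: 'X + (U`_0)%:P) ^+ d + c0%:P) \Po 'X^d.
Proof.
move=> sU sa; rewrite -!comp_polyA !comp_Xn_poly [in RHS]comp_polyA.
move=> /(congr1 (fun P => lin_inv U \Po P)).
rewrite !comp_polyA lin_inv_comp // comp_polyX => ->.
have sc : size ((lin_inv U \Po a) \Po U) = 2%N by rewrite !size_comp_poly2 ?size_lin_inv.
move: (_ \Po U) sc => c sc; exists c`_1, c`_0.
by rewrite (comp_lin_poly _ sc) comp_polyD comp_polyZ comp_polyC rmorphXn /= -(lin_polyE sU).
Qed.

Definition lin_solution (K : fieldType) (F l : {poly K}) (ab : {poly K} * {poly K}) :=
  [/\ size ab.1 = 2%N, size ab.2 = 2%N & F \Po (l \Po (F \Po ab.2)) = ab.1 \Po (F \Po F)].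

Lemma lin_solution_monomial (K : fieldType) (v F l : {poly K}) d (eps delta r : K) :
    size v = 2%N -> delta != 0 -> r != 0 ->
  lin_conj v F = eps *: 'X^d -> lin_conj v l = delta *: 'X ->
  lin_solution F l (lin_unconj v ((delta ^+ d * r ^+ (d * d)) *: 'X), lin_unconj v (r *: 'X)).
Proof.
move=> sv delta_neq0 r_neq0 cF cl.
have sX c : c != 0 -> size (c *: 'X : {poly K}) = 2%N.
  by move=> c_neq0; rewrite size_scale ?size_polyX.
split=> /=; rewrite ?size_lin_unconj ?sX ?mulf_neq0 ?expf_neq0 //.
(* Generalized, since [lin_conj_comp] would otherwise also split [lin_unconj], a composition. *)
move: (lin_unconj v _) (lin_unconj v _) (lin_unconjK sv ((delta ^+ d * r ^+ (d * d)) *: 'X))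
  (lin_unconjK sv (r *: 'X)) => a b ca cb.
apply: (lin_conj_inj sv); rewrite !lin_conj_comp // cF cl ca cb.
rewrite !comp_polyZ !comp_Xn_poly !comp_polyX !exprZn !scalerA -!exprM.
by congr (_ *: _); ring.
Qed.

Section Equation.
Variable K : fieldType.
Hypothesis charK : [pchar K] =i pred0.
Variables u v l : {poly K}.
Hypotheses (su : size u = 2%N) (sv : size v = 2%N) (sl : size l = 2%N).
Variable d : nat.
Hypothesis d_gt1 : (1 < d)%N.

Local Notation F := (u \Po ('X^d \Po v)).
Local Notation U := (v \Po u).
Local Notation M := (lin_conj v l \Po U).

Lemma size_U : size U = 2%N. Proof. by rewrite size_comp_poly2. Qed.

Lemma size_M : size M = 2%N.
Proof. by rewrite size_comp_poly2 ?size_U // size_lin_conj. Qed.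

Lemma lin_conj_F : lin_conj v F = U \Po 'X^d.
Proof. by rewrite comp_polyA lin_conj_compr // comp_polyA. Qed.

Lemma lin_solution_conj ab : lin_solution F l ab ->
  (lin_conj v ab.2)`_0 = 0 /\ M`_0 * U`_1 = M`_1 * (lin_conj v ab.2)`_1 ^+ d * U`_0.
Proof.
case: ab => a b [/= sa sb eab].
set b' := lin_conj v b; have sb' : size b' = 2%N by rewrite size_lin_conj.
(* F is a composition itself: generalize it so that [lin_conj_comp] leaves it whole. *)
move: F eab lin_conj_F => G eab cG.
have := congr1 (lin_conj v) eab; rewrite !lin_conj_comp // cG -/b'.
case/equation_power_form=> [||c1 [c0]]; first exact: size_U.
  by rewrite size_lin_conj.
rewrite (comp_lin_poly _ size_M) {1}(lin_polyE sb').
move/(lin_expn_comp_Xn_eq charK d_gt1 _ (lin_poly_coef1_neq0 sb')); apply.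
exact: lin_poly_coef1_neq0 size_M.
Qed.

Lemma size_F : (size F).-1 = d.
Proof. by rewrite !size_comp_poly size_polyXn su sv mul1n muln1. Qed.

Lemma lin_solution_inj ab ab' : lin_solution F l ab -> lin_solution F l ab' ->
  (lin_conj v ab.2)`_1 = (lin_conj v ab'.2)`_1 -> ab = ab'.
Proof.
case: ab ab' => [a b] [a' b'] sol sol' eb1.
have [[/= _ sb eab] [/= _ sb' eab']] := (sol, sol').
have [eb0 _] := lin_solution_conj sol; have [eb0' _] := lin_solution_conj sol'.
have eb : b = b'.
  apply: (lin_conj_inj sv).
  by rewrite (lin_polyE (size_lin_conj sv sb)) (lin_polyE (size_lin_conj sv sb')) /= eb0 eb0' eb1.
subst b'; congr (_, _); apply/eqP; rewrite -subr_eq0.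
have sFF : (1 < size (F \Po F))%N.
  by have := size_comp_poly F F; rewrite size_F; case: (size _) => [|[|n]] //= e; lia.
by rewrite -(comp_poly_eq0 _ sFF) comp_polyB -eab eab' subrr.
Qed.

Lemma lin_normal_form : U`_0 = 0 -> M`_0 = 0 ->
  exists eps delta : K, [/\ eps != 0, delta != 0,
    F = lin_unconj v (eps *: 'X^d) & l = lin_unconj v (delta *: 'X)].
Proof.
move=> U0 M0; have U1_neq0 := lin_poly_coef1_neq0 size_U.
exists U`_1, (M`_1 / U`_1); split.
- exact: U1_neq0.
- by rewrite mulf_neq0 ?invr_eq0 // (lin_poly_coef1_neq0 size_M).
- apply: (lin_conj_inj sv); rewrite lin_unconjK // lin_conj_F.
  by rewrite (comp_lin_poly _ size_U) U0 addr0.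
have UV : U \Po ((U`_1)^-1 *: 'X) = 'X.
  by rewrite (comp_lin_poly _ size_U) U0 addr0 scalerA mulfV // scale1r.
apply: (lin_conj_inj sv); rewrite lin_unconjK //.
rewrite -{1}[lin_conj v l]comp_polyXr -{1}UV comp_polyA (comp_lin_poly _ size_M) M0 addr0.
by rewrite scalerA.
Qed.

Lemma lin_solutions_finite_or_normal_form :
  (exists s : seq ({poly K} * {poly K}), forall ab, lin_solution F l ab -> ab \in s) \/
  (exists eps delta : K, [/\ eps != 0, delta != 0,
     F = lin_unconj v (eps *: 'X^d) & l = lin_unconj v (delta *: 'X)]).
Proof.
have [/andP [/eqP U0 /eqP M0]|nontriv] := boolP ((U`_0 == 0) && (M`_0 == 0)).
  by right; apply: lin_normal_form.
have [U1_neq0 M1_neq0] := (lin_poly_coef1_neq0 size_U, lin_poly_coef1_neq0 size_M).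
left; pose q := (M`_1 * U`_0) *: 'X^d - (M`_0 * U`_1)%:P.
apply: (@finite_cover_of_inj_roots _ _ _ (fun ab => (lin_conj v ab.2)`_1) q).
- apply: contraNneq nontriv => q0.
  have := congr1 (fun P : {poly K} => P`_d) q0; have := congr1 (fun P : {poly K} => P`_0) q0.
  have d_neq0 : (0 == d)%N = false by case: d d_gt1.
  rewrite /q /= !coefB !coefZ !coefXn !coefC !eqxx d_neq0 eq_sym d_neq0 /=.
  rewrite mulr0 mulr1 sub0r subr0.
  move=> /eqP; rewrite oppr_eq0 mulf_eq0 (negPf U1_neq0) orbF => /eqP ->.
  by move=> /eqP; rewrite mulf_eq0 (negPf M1_neq0) => /eqP ->; rewrite eqxx.
- exact: lin_solution_inj.
- move=> ab /lin_solution_conj [_ eM].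
  by rewrite /root /q !hornerE eM; apply/eqP; ring.
Qed.
End Equation.

Lemma normal_form_lin_solutions_infinite (K : fieldType) (v F l : {poly K}) d (eps delta : K) :
    [pchar K] =i pred0 -> size v = 2%N -> delta != 0 ->
  F = lin_unconj v (eps *: 'X^d) -> l = lin_unconj v (delta *: 'X) ->
  ~ exists s : seq ({poly K} * {poly K}), forall ab, lin_solution F l ab -> ab \in s.
Proof.
move=> charK sv delta_neq0 eF el [s cover].
have [r [r_neq0 /negP]] := char0_exists_nonzero_notin charK [seq (lin_conj v ab.2)`_1 | ab <- s].
apply; apply/mapP; eexists.
  apply/cover/(lin_solution_monomial (r := r) sv delta_neq0 r_neq0).
    by rewrite eF lin_unconjK.
  by rewrite el lin_unconjK.
by rewrite /= lin_unconjK // coefZ coefX mulr1.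
Qed.

Unset Implicit Arguments.

Theorem lemma4p2 (K : fieldType) (charK : [pchar K] =i pred0)
    (u v l : {poly K}) (d : nat)
    (hu : size u = 2%N) (hv : size v = 2%N) (hl : size l = 2%N)
    (hd : (1 < d)%N) :
  let F := u \Po ('X^d \Po v) in
  (~ exists s : seq ({poly K} * {poly K}),
       forall a b : {poly K}, size a = 2%N -> size b = 2%N ->
         F \Po (l \Po (F \Po b)) = a \Po (F \Po F) -> (a, b) \in s)
  <->
  (exists eps delta : K, eps != 0 /\ delta != 0 /\
     F = lin_inv v \Po ((eps *: 'X^d) \Po v) /\
     l = lin_inv v \Po ((delta *: 'X) \Po v)).
Proof.
move=> F; split=> [infinite | [eps [delta [_ [delta_neq0 [eF el]]]]]].
  have [[s cover]|[eps [delta [eps_neq0 delta_neq0 eF el]]]] :=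
    lin_solutions_finite_or_normal_form charK hu hv hl hd.
    by case: infinite; exists s => a b sa sb eab; apply: cover.
  by exists eps, delta.
move=> [s cover]; apply: (normal_form_lin_solutions_infinite charK hv delta_neq0 eF el).
by exists s => -[a b] [sa sb eab]; apply: cover.
Qed.
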